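(* For every vertex $t\in\mathbb T_n$ of the $(\mathbf r,\mathbf z)$-seed pattern described in the context, $G_tB_t=B_{t_0}C_t$.
   Context: $n\ge1$, $[b]_+=\max(b,0)$. $\mathbb T_n$ is the $n$-regular tree with edges labeled $1,\dots,n$, distinct labels at each vertex; $t\overset{k}{-}t'$ denotes an edge labeled $k$; $t_0$ is a root vertex. Fix positive integers $r_1,\dots,r_n$ and a skew-symmetrizable integer $n\times n$ matrix $B$. Assign integer $n\times n$ matrices $B_t=(b_{ij;t})$, $C_t=(c_{ij;t})$ and $G_t$ (with columns $\mathbf g_{i;t}$) to each $t\in\mathbb T_n$ by $B_{t_0}=B$, $C_{t_0}=G_{t_0}=I_n$, and for $t\overset{k}{-}t'$, with $\varepsilon\in\{\pm1\}$ (the results are independent of $\varepsilon$): $b_{ij;t'}=-b_{ij;t}$ if $i=k$ or $j=k$, else $b_{ij;t'}=b_{ij;t}+r_k([-\varepsilon b_{ik;t}]_+b_{kj;t}+b_{ik;t}[\varepsilon b_{kj;t}]_+)$; $c_{ij;t'}=-c_{ij;t}$ if $j=k$, else $c_{ij;t'}=c_{ij;t}+r_k(c_{ik;t}[\varepsilon b_{kj;t}]_++[-\varepsilon c_{ik;t}]_+b_{kj;t})$; $\mathbf g_{i;t'}=\mathbf g_{i;t}$ for $i\ne k$ and $\mathbf g_{k;t'}=-\mathbf g_{k;t}+r_k\big(\sum_{j=1}^n[-\varepsilon b_{jk;t}]_+\mathbf g_{j;t}-\sum_{j=1}^n[-\varepsilon c_{jk;t}]_+\mathbf b_j\big)$ with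 $\mathbf b_j$ the $j$-th column of $B$. ($B_t$ is the exchange matrix at $t$ of the generalized $(\mathbf r,\mathbf z)$-seed pattern with initial exchange matrix $B$, and $C_t,G_t$ are its $C$- and $G$-matrices.) *)

From mathcomp Require Import all_boot all_order all_algebra.
Set Implicit Arguments. Unset Strict Implicit. Unset Printing Implicit Defensive.
Import Order.TTheory GRing.Theory Num.Theory.
Local Open Scope ring_scope.

Definition posp (b : int) : int := Num.max b 0.

Definition skew_symmetrizable (n : nat) (B : 'M[int]_n) : Prop :=
  exists d : 'I_n -> nat, (forall i, (0 < d i)%N) /\
    forall i j, (d i)%:Z * B i j = - ((d j)%:Z * B j i).

Section Mut.
Variables (n : nat) (r : 'I_n -> nat) (B0 : 'M[int]_n).

Definition mutB (e : int) (k : 'I_n) (B : 'M[int]_n) : 'M[int]_n :=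
  \matrix_(i, j) if (i == k) || (j == k) then - B i j
                 else B i j + (r k)%:Z * (posp (- e * B i k) * B k j
                                          + B i k * posp (e * B k j)).

Definition mutC (e : int) (k : 'I_n) (B C : 'M[int]_n) : 'M[int]_n :=
  \matrix_(i, j) if j == k then - C i j
                 else C i j + (r k)%:Z * (C i k * posp (e * B k j)
                                          + posp (- e * C i k) * B k j).

Definition mutG (e : int) (k : 'I_n) (B C G : 'M[int]_n) : 'M[int]_n :=
  \matrix_(i, j) if j == k then
      - G i k + (r k)%:Z * (\sum_(l < n) posp (- e * B l k) * G i l
                            - \sum_(l < n) posp (- e * C l k) * B0 i l)
    else G i j.

Definition seed := ('M[int]_n * 'M[int]_n * 'M[int]_n)%type.

Definition mut_seed (ke : 'I_n * int) (s : seed) : seed :=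
  let: (B, C, G) := s in
  (mutB ke.2 ke.1 B, mutC ke.2 ke.1 B C, mutG ke.2 ke.1 B C G).

(* The vertex t of T_n reached from t0 by the path of edges labelled
   w.1 (in order), each mutation performed with the sign w.2. *)
Definition seed_at (w : seq ('I_n * int)) : seed :=
  foldl (fun s ke => mut_seed ke s) (B0, 1%:M, 1%:M) w.

Definition B_at w := (seed_at w).1.1.
Definition C_at w := (seed_at w).1.2.
Definition G_at w := (seed_at w).2.
End Mut.

(* Mutation in direction k is a matrix operation.  Let J be the identity with
   its k-th column replaced by (r_k [-e b_ik]_+)_i, K the identity with its k-th
   row replaced by (r_k [e b_kj]_+)_j (both with -1 at (k, k)), and Z the matrix
   whose only nonzero column, the k-th, is (r_k [-e c_ik]_+)_i.  When b_kk = 0,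
     B' = J B K,   C' = C K + Z B,   G' = G J - B_t0 Z.
   As J^2 = 1, Z J = -Z and B K has the same k-th row as B, G B = B_t0 C gives
   G' B' = G B K + B_t0 Z B = B_t0 C'.  The condition b_kk = 0 persists because
   a skew-symmetrizer D of B is one of B' too: D J = K^T D, so D B' = K^T (D B) K. *)

From mathcomp Require Import all_boot all_order all_algebra.
From mathcomp Require Import ring zify.
Set Implicit Arguments. Unset Strict Implicit. Unset Printing Implicit Defensive.
Import Order.TTheory GRing.Theory Num.Theory.
Local Open Scope ring_scope.

Section ColumnReplacedIdentity.
Variables (R : pzRingType) (n : nat) (k : 'I_n).

Definition idmx_col (u : 'I_n -> R) : 'M[R]_n :=
  \matrix_(i, j) if j == k then u i else (i == j)%:R.

Definition idmx_row (v : 'I_n -> R) : 'M[R]_n :=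
  \matrix_(i, j) if i == k then v j else (i == j)%:R.

Definition single_col_mx (z : 'I_n -> R) : 'M[R]_n :=
  \matrix_(i, j) if j == k then z i else 0.

Lemma sum_mulr_delta (F : 'I_n -> R) j : \sum_l F l * (l == j)%:R = F j.
Proof.
by under eq_bigr do rewrite mulr_natr mulrb; rewrite -big_mkcond big_pred1_eq.
Qed.

Lemma sum_delta_mull (F : 'I_n -> R) i : \sum_l (i == l)%:R * F l = F i.
Proof.
under eq_bigr do rewrite mulr_natl mulrb eq_sym.
by rewrite -big_mkcond big_pred1_eq.
Qed.

Lemma mul_single_col_mx z (A : 'M_n) i j :
  (single_col_mx z *m A) i j = z i * A k j.
Proof.
rewrite mxE (bigD1 k) //= mxE eqxx big1 ?addr0 // => l /negbTE lk.
by rewrite mxE lk mul0r.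
Qed.

Lemma mul_mx_single_col (A : 'M_n) z i j :
  (A *m single_col_mx z) i j = if j == k then \sum_l A i l * z l else 0.
Proof.
rewrite mxE; case: eqP => [->|]; first by apply: eq_bigr => l _; rewrite mxE eqxx.
by move/eqP/negbTE => jk; apply: big1 => l _; rewrite mxE jk mulr0.
Qed.

Lemma mul_mx_idmx_col (A : 'M_n) u i j :
  (A *m idmx_col u) i j = if j == k then \sum_l A i l * u l else A i j.
Proof.
rewrite mxE; under eq_bigr do rewrite mxE.
by case: eqP => _ //; rewrite sum_mulr_delta.
Qed.

Lemma mul_idmx_col_mx u (A : 'M_n) i j :
  (idmx_col u *m A) i j = (if i == k then 0 else A i j) + u i * A k j.
Proof.
rewrite mxE (bigD1 k) //= mxE eqxx addrC; congr (_ + _); rewrite big_mkcond /=.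
transitivity (\sum_l (i == l)%:R * (if l != k then A l j else 0)).
  by apply: eq_bigr => l _; rewrite mxE; case: eqVneq => [->|] /=; rewrite ?mulr0.
by rewrite sum_delta_mull if_neg.
Qed.

Lemma mul_mx_idmx_row (A : 'M_n) v i j :
  (A *m idmx_row v) i j = (if j == k then 0 else A i j) + A i k * v j.
Proof.
rewrite mxE (bigD1 k) //= mxE eqxx addrC; congr (_ + _); rewrite big_mkcond /=.
transitivity (\sum_l (if l != k then A i l else 0) * (l == j)%:R).
  by apply: eq_bigr => l _; rewrite mxE; case: eqVneq => [->|] /=; rewrite ?mul0r.
by rewrite sum_mulr_delta if_neg.
Qed.

Lemma idmx_col_involutive u : u k = -1 -> idmx_col u *m idmx_col u = 1%:M.
Proof.
move=> ukN1; apply/matrixP => i j; rewrite mul_idmx_col_mx !mxE ukN1.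
case: (eqVneq j k) => [->|jk].
  by case: eqVneq => [->|ik];
    rewrite ?ukN1 mulrN1 ?opprK ?add0r ?addrN // eq_sym (negbTE ik).
by rewrite mulr0 addr0; case: eqVneq => [->|//]; rewrite eq_sym (negbTE jk).
Qed.

Lemma single_col_mx_idmx_col z u :
  u k = -1 -> single_col_mx z *m idmx_col u = - single_col_mx z.
Proof.
move=> ukN1; apply/matrixP => i j; rewrite mul_single_col_mx !mxE ukN1.
by case: (eqVneq j k) => _; rewrite ?mulrN1 ?mulr0 ?oppr0.
Qed.

Lemma single_col_mx_row_eq z (A A' : 'M_n) :
  row k A = row k A' -> single_col_mx z *m A = single_col_mx z *m A'.
Proof.
move=> eqA; apply/matrixP => i j; rewrite !mul_single_col_mx.
by move/rowP/(_ j): eqA; rewrite !mxE => ->.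
Qed.
End ColumnReplacedIdentity.

Lemma diag_mx_idmx_col (R : comPzRingType) n k (d u v : 'I_n -> R) :
  (forall i, d i * u i = v i * d k) ->
  diag_mx (\row_i d i) *m idmx_col k u = (idmx_row k v)^T *m diag_mx (\row_i d i).
Proof.
move=> duv; apply/matrixP => i j; rewrite mul_diag_mx mul_mx_diag !mxE.
case: eqVneq => [->|_]; first exact: duv.
by case: eqVneq => [->|]; rewrite ?mulr1 ?mul1r // mulr0 mul0r.
Qed.

Lemma posp_mull (d x : int) : 0 <= d -> posp (d * x) = d * posp x.
Proof. by move=> d_ge0; rewrite /posp maxr_pMr // mulr0. Qed.

Lemma posp0 : posp 0 = 0.
Proof. by rewrite /posp maxxx. Qed.

Section MutationMatrices.
Variables (n : nat) (r : 'I_n -> nat) (e : int) (k : 'I_n).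

Definition mutJ (B : 'M[int]_n) : 'M[int]_n :=
  idmx_col k (fun i => if i == k then -1 else (r k)%:Z * posp (- e * B i k)).

Definition mutK (B : 'M[int]_n) : 'M[int]_n :=
  idmx_row k (fun j => if j == k then -1 else (r k)%:Z * posp (e * B k j)).

Definition mutZ (C : 'M[int]_n) : 'M[int]_n :=
  single_col_mx k (fun i => (r k)%:Z * posp (- e * C i k)).

Variable B : 'M[int]_n.

Lemma mutJ_involutive : mutJ B *m mutJ B = 1%:M.
Proof. by apply: idmx_col_involutive; rewrite eqxx. Qed.

Lemma mutZ_mulmx_mutJ C : mutZ C *m mutJ B = - mutZ C.
Proof. by apply: single_col_mx_idmx_col; rewrite eqxx. Qed.

Hypothesis Bkk : B k k = 0.

Lemma row_mulmx_mutK : row k (B *m mutK B) = row k B.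
Proof.
apply/rowP => j; rewrite /mutK mxE mul_mx_idmx_row Bkk mul0r addr0 mxE.
by case: eqVneq => [->|].
Qed.

Lemma mutB_factor : mutB r e k B = mutJ B *m B *m mutK B.
Proof.
apply/matrixP => i j; rewrite /mutJ /mutK -mulmxA mul_idmx_col_mx.
rewrite !(mul_mx_idmx_row _ B) !mxE.
by case: (eqVneq i k) => [->|_]; case: (eqVneq j k) => [->|_] /=; rewrite ?Bkk; ring.
Qed.

Lemma mutC_factor C : mutC r e k B C = C *m mutK B + mutZ C *m B.
Proof.
apply/matrixP => i j; rewrite [LHS]mxE [RHS]mxE /mutK /mutZ.
rewrite (mul_mx_idmx_row _ C) mul_single_col_mx.
by case: (eqVneq j k) => [->|_] /=; rewrite ?Bkk; ring.
Qed.

Lemma mutG_factor B0 C G : mutG r B0 e k B C G = G *m mutJ B - B0 *m mutZ C.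
Proof.
apply/matrixP => i j; rewrite [LHS]mxE [RHS]mxE /mutJ /mutZ (mul_mx_idmx_col _ G).
rewrite mxE (mul_mx_single_col _ B0); case: eqVneq => _; last by rewrite oppr0 addr0.
have -> : \sum_l G i l * (if l == k then -1 else (r k)%:Z * posp (- e * B l k))
          = (r k)%:Z * \sum_l posp (- e * B l k) * G i l - G i k.
  rewrite mulr_sumr -[G i k](sum_mulr_delta (G i)) -sumrB; apply: eq_bigr => l _.
  by case: eqVneq => [->|_]; rewrite ?Bkk ?mulr0 ?posp0 /=; ring.
have -> : \sum_l B0 i l * ((r k)%:Z * posp (- e * C l k))
          = (r k)%:Z * \sum_l posp (- e * C l k) * B0 i l.
  by rewrite mulr_sumr; apply: eq_bigr => l _; ring.
ring.
Qed.

Lemma mutG_mulmx_mutB B0 C G : G *m B = B0 *m C ->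
  mutG r B0 e k B C G *m mutB r e k B = B0 *m mutC r e k B C.
Proof.
have JJBK : mutJ B *m (mutJ B *m B *m mutK B) = B *m mutK B.
  by rewrite !mulmxA mutJ_involutive mul1mx.
have ZJBK : mutZ C *m (mutJ B *m B *m mutK B) = - (mutZ C *m B).
  rewrite !mulmxA mutZ_mulmx_mutJ !mulNmx -mulmxA.
  by rewrite (single_col_mx_row_eq _ row_mulmx_mutK).
move=> GB; rewrite mutG_factor mutB_factor mutC_factor mulmxBl.
by rewrite -(mulmxA G) -(mulmxA B0) JJBK ZJBK mulmxA GB -mulmxA mulmxN opprK mulmxDr.
Qed.
End MutationMatrices.

Section SkewSymmetrizable.
Variable n : nat.
Implicit Types (d : 'I_n -> nat) (B : 'M[int]_n).

Definition diag_natmx d : 'M[int]_n := diag_mx (\row_i (d i)%:Z).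

Lemma skew_symmetrizerP d B :
  (forall i j, (d i)%:Z * B i j = - ((d j)%:Z * B j i)) <->
  (diag_natmx d *m B)^T = - (diag_natmx d *m B).
Proof.
rewrite /diag_natmx mul_diag_mx; split => [dB|/matrixP dB i j].
  by apply/matrixP => i j; rewrite !mxE dB.
by have := dB j i; rewrite !mxE.
Qed.

Lemma skew_symmetrizable_diag0 B i : skew_symmetrizable B -> B i i = 0.
Proof. by case=> d [d_gt0 dB]; have := d_gt0 i; have := dB i i; nia. Qed.

Lemma skew_symmetrizable_mutB r e k B :
  skew_symmetrizable B -> skew_symmetrizable (mutB r e k B).
Proof.
move=> skB; have Bkk := skew_symmetrizable_diag0 k skB.
case: skB => d [d_gt0 dB]; exists d; split => //.
move/skew_symmetrizerP: (dB) => skewDB; apply/skew_symmetrizerP.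
have DJ : diag_natmx d *m mutJ r e k B = (mutK r e k B)^T *m diag_natmx d.
  apply: diag_mx_idmx_col => i; case: eqVneq => [->|_]; first by rewrite mulrN1 mulN1r.
  have dpospN : (d i)%:Z * posp (- e * B i k) = (d k)%:Z * posp (e * B k i).
    by rewrite -!posp_mull // mulrCA dB mulrN mulNr opprK mulrCA.
  by rewrite mulrCA dpospN; ring.
rewrite mutB_factor // !mulmxA DJ -(mulmxA _ (diag_natmx d)).
by rewrite 2!trmx_mul trmxK skewDB mulNmx mulmxN mulmxA.
Qed.
End SkewSymmetrizable.

Section SeedPattern.
Variables (n : nat) (r : 'I_n -> nat) (B0 : 'M[int]_n).

Definition GB_invariant (s : seed n) : Prop :=
  skew_symmetrizable s.1.1 /\ s.2 *m s.1.1 = B0 *m s.1.2.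

Lemma mut_seed_GB_invariant ke s :
  GB_invariant s -> GB_invariant (mut_seed r B0 ke s).
Proof.
case: ke s => k e [[B C] G] [skB GB]; split; first exact: skew_symmetrizable_mutB.
by apply: mutG_mulmx_mutB => //; apply: skew_symmetrizable_diag0.
Qed.

Lemma seed_at_GB_invariant w :
  skew_symmetrizable B0 -> GB_invariant (seed_at r B0 w).
Proof.
move=> skB0; have : GB_invariant (B0, 1%:M, 1%:M) by split; rewrite //= mul1mx mulmx1.
rewrite /seed_at; elim: w (B0, 1%:M, 1%:M) => [|ke w IHw] s //=.
by move/(mut_seed_GB_invariant ke); apply: IHw.
Qed.
End SeedPattern.

Theorem propositionP5 (n : nat) (r : 'I_n -> nat) (B : 'M[int]_n)
  (w : seq ('I_n * int)) :
  (forall k, (0 < r k)%N) ->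
  skew_symmetrizable B ->
  sorted (fun a b : 'I_n * int => a.1 != b.1) w ->
  all (fun ke : 'I_n * int => (ke.2 == 1) || (ke.2 == -1)) w ->
  G_at r B w *m B_at r B w = B *m C_at r B w.
Proof. by move=> _ skB _ _; case: (seed_at_GB_invariant r w skB). Qed.
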